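(* Suppose $s_\alpha\in R$ and $w\in W$ satisfy $\ell(s_\alpha w)=\ell(w)+1$. Then (1) $s_\alpha w>w$; and (2) if $s_i$ is a simple reflection with $s_i\neq s_\alpha$ and $s_iw>w$, then $s_is_\alpha w>s_\alpha w$.
   Context: $G$ is a complex reductive linear algebraic group, $B$ is a Borel subgroup, $T\subseteq B$ is a maximal torus, and $W=N(T)/T$ is the Weyl group, with simple reflections $S=\{s_i\}$ and reflections $R=\bigcup_{w\in W}wSw^{-1}$. $s_\alpha$ denotes the reflection associated to the positive root $\alpha$. $\ell(w)$ is the minimal length of a factorization of $w$ into simple reflections. $w\ge v$ in the Bruhat order iff $\overline{BwB/B}\supseteq BvB/B$; equivalently, some (any) reduced word for $w$ contains a subword that is a reduced word for $v$. *)

(* Weyl group realized concretely as the group of matrices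
   generated by the simple reflections of a (reduced, crystallographic) root
   system with a chosen base. *)
From HB Require Import structures.
From mathcomp Require Import all_boot all_order all_algebra.
From mathcomp Require Export reals.
Set Implicit Arguments.
Unset Strict Implicit.
Unset Printing Implicit Defensive.
Import Order.TTheory GRing.Theory Num.Theory.
Local Open Scope ring_scope.

Section Weyl.
Variables (R : realType) (n : nat).

Definition dotv (u v : 'rV[R]_n) : R := (u *m v^T) 0 0.

(* the orthogonal reflection in the hyperplane orthogonal to a (symmetric
   matrix; acts on row vectors by x *m refl a and on columns by refl a *m y) *)
Definition refl (a : 'rV[R]_n) : 'M[R]_n :=
  1%:M - (2 / dotv a a) *: (a^T *m a).

(* reduced crystallographic root system (not required to span) *)
Definition is_root_system (Phi : seq 'rV[R]_n) : Prop :=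
  [/\ 0 \notin Phi,
      {in Phi &, forall a b, b *m refl a \in Phi},
      {in Phi &, forall a b, exists z : int, 2 * dotv b a / dotv a a = z%:~R}
    & forall a (c : R), a \in Phi -> c *: a \in Phi -> c = 1 \/ c = -1].

Definition is_base (Phi Delta : seq 'rV[R]_n) : Prop :=
  [/\ {subset Delta <= Phi}, uniq Delta,
      (forall c : 'I_(size Delta) -> R,
          \sum_(i < size Delta) c i *: Delta`_i = 0 -> forall i, c i = 0)
    & forall b, b \in Phi -> exists k : 'I_(size Delta) -> int,
          b = \sum_(i < size Delta) (k i)%:~R *: Delta`_i /\
          ((forall i, 0 <= k i) \/ (forall i, k i <= 0))].

Variable Delta : seq 'rV[R]_n.

Definition wprod (ws : seq 'rV[R]_n) : 'M[R]_n :=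
  foldr (fun a M => refl a *m M) 1%:M ws.

Definition is_word (ws : seq 'rV[R]_n) (w : 'M[R]_n) : Prop :=
  {subset ws <= Delta} /\ wprod ws = w.

(* w lies in W and l(w) = k *)
Definition has_length (w : 'M[R]_n) (k : nat) : Prop :=
  (exists ws, is_word ws w /\ size ws = k) /\
  (forall ws, is_word ws w -> (k <= size ws)%N).

Definition reduced_word (ws : seq 'rV[R]_n) (w : 'M[R]_n) : Prop :=
  is_word ws w /\ forall ws', is_word ws' w -> (size ws <= size ws')%N.

(* Bruhat order via subwords: v <= w iff some reduced word of w contains
   a subword that is a reduced word for v *)
Definition bruhat_le (v w : 'M[R]_n) : Prop :=
  exists ws, reduced_word ws w /\
    exists us, subseq us ws /\ reduced_word us v.

Definition bruhat_lt (v w : 'M[R]_n) : Prop := bruhat_le v w /\ v <> w.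

End Weyl.

From mathcomp Require Import all_boot all_order all_algebra.
From mathcomp Require Import reals zify.
Import Order.TTheory GRing.Theory Num.Theory.
Local Open Scope ring_scope.
Set Implicit Arguments.
Unset Strict Implicit.

(* Roots are rows and W acts on them on the right, so for a word ws the sign
   of b *m wprod ws decides whether the reflection in the positive root b
   shortens wprod ws. The main tool is the strong exchange condition: if
   b *m wprod ws is negative, then refl b *m wprod ws is obtained by deleting
   one letter of ws. Hence l(s_c v) = l(v) + 1 forces v < s_c v, since
   deleting a letter from a reduced word of s_c v leaves a reduced word of v.
   For (2), write s_a = s_beta with beta positive. If b *m s_a w were negative,
   two deletions (the second one cannot remove the leading s_b, as
   s_b <> s_beta) would give a word for s_b w shorter than l(w), contradicting
   w < s_b w; so l(s_b s_a w) = l(s_a w) + 1 and (1) applies again. *)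

Section Reflections.
Variables (R : realType) (n : nat).
Implicit Types (a b g x : 'rV[R]_n) (M : 'M[R]_n).

Lemma mulmx_trmx_dotv x a : x *m a^T *m a = dotv x a *: a.
Proof. by rewrite [x *m a^T]mx11_scalar mul_scalar_mx. Qed.

Lemma dotv_self_neq0 a : a != 0 -> dotv a a != 0.
Proof.
apply: contra_neq; rewrite /dotv mxE => a2_0; apply/rowP => j; rewrite mxE.
have sq_ge0 i : predT i -> 0 <= a 0 i * a^T i 0 by rewrite mxE -expr2 sqr_ge0.
have := @psumr_eq0P R _ predT _ sq_ge0 a2_0 j isT; rewrite mxE => /eqP.
by rewrite mulf_eq0 orbb => /eqP.
Qed.

Lemma trmx_refl a : (refl a)^T = refl a.
Proof. by rewrite /refl linearB /= trmx1 linearZ /= trmx_mul trmxK. Qed.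

Lemma mulmx_refl x a : x *m refl a = x - (2 * dotv x a / dotv a a) *: a.
Proof.
by rewrite /refl mulmxBr mulmx1 -scalemxAr mulmxA mulmx_trmx_dotv scalerA mulrAC.
Qed.

Lemma mulmx_refl_self a : a != 0 -> a *m refl a = - a.
Proof.
move=> a0; rewrite mulmx_refl -mulrA divff ?dotv_self_neq0 // mulr1 scaler_nat.
by rewrite mulr2n opprD addrA subrr add0r.
Qed.

Lemma reflK a : a != 0 -> refl a *m refl a = 1%:M.
Proof.
move=> a0; have a2_0 := dotv_self_neq0 a0.
have outer_sq : a^T *m a *m (a^T *m a) = dotv a a *: (a^T *m a).
  by rewrite -mulmxA (mulmxA a) [a *m a^T]mx11_scalar mul_scalar_mx scalemxAr.
rewrite {1}/refl mulmxBl mul1mx -scalemxAl /refl mulmxBr mulmx1 -scalemxAr.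
rewrite outer_sq scalerA divfK // scaler_nat mulr2n opprD addrA subrr add0r.
by rewrite scalerN opprK subrK.
Qed.

Lemma reflKl a M : a != 0 -> refl a *m (refl a *m M) = M.
Proof. by move=> a0; rewrite mulmxA reflK // mul1mx. Qed.

Lemma reflN a : refl (- a) = refl a.
Proof.
by rewrite /refl /dotv linearN /= mulNmx mulmxN mulNmx mulmxN opprK !mxE opprK.
Qed.

Lemma refl_conj a g : a != 0 -> refl a *m refl g *m refl a = refl (g *m refl a).
Proof.
move=> a0; have [ra_sym raK] := (trmx_refl a, reflK a0).
have dotv_conj : dotv (g *m refl a) (g *m refl a) = dotv g g.
  by rewrite /dotv trmx_mul ra_sym -(mulmxA g) (mulmxA (refl a)) raK mul1mx.
rewrite [refl (_ *m _)]/refl dotv_conj trmx_mul ra_sym.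
move: (refl a) ra_sym raK => M _ MK.
by rewrite /refl mulmxBr mulmx1 mulmxBl MK -!scalemxAr -scalemxAl !mulmxA.
Qed.

Lemma refl_mul_conj b a : a != 0 ->
  refl b *m refl a = refl a *m refl (b *m refl a).
Proof. by move=> a0; rewrite -refl_conj // !mulmxA reflK // mul1mx. Qed.

End Reflections.

Section RootSystem.
Variables (R : realType) (n : nat) (Phi Delta : seq 'rV[R]_n).
Hypothesis hPhi : is_root_system Phi.
Hypothesis hDelta : is_base Phi Delta.
Implicit Types (a b c g s : 'rV[R]_n) (v w : 'M[R]_n) (ws : seq 'rV[R]_n).

Local Notation N := (size Delta).

Definition pos_vec g := exists k : 'I_N -> int,
  g = \sum_(i < N) (k i)%:~R *: Delta`_i /\ forall i, 0 <= k i.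
Definition neg_vec g := exists k : 'I_N -> int,
  g = \sum_(i < N) (k i)%:~R *: Delta`_i /\ forall i, k i <= 0.

Lemma root_neq0 g : g \in Phi -> g != 0.
Proof. by case: hPhi => Phi0 _ _ _ Hg; apply: contraNneq Phi0 => <-. Qed.

Lemma root_refl a g : a \in Phi -> g \in Phi -> g *m refl a \in Phi.
Proof. by case: hPhi => _ refl_closed _ _; apply: refl_closed. Qed.

Lemma rootN g : g \in Phi -> - g \in Phi.
Proof. by move=> Hg; rewrite -mulmx_refl_self ?root_neq0 // root_refl. Qed.

Lemma simple_root s : s \in Delta -> s \in Phi.
Proof. by case: hDelta => sub _ _ _; apply: sub. Qed.

Lemma simple_neq0 s : s \in Delta -> s != 0.
Proof. by move/simple_root/root_neq0. Qed.

Lemma root_mul_word g ws : g \in Phi -> {subset ws <= Delta} ->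
  g *m wprod ws \in Phi.
Proof.
elim: ws g => [|s ws IH] g Hg Hws /=; first by rewrite mulmx1.
rewrite mulmxA; apply: IH => [|x Hx]; last by rewrite Hws // inE Hx orbT.
by rewrite root_refl // simple_root // Hws ?mem_head.
Qed.

Lemma pos_or_neg g : g \in Phi -> pos_vec g \/ neg_vec g.
Proof.
by case: hDelta => _ _ _ H /H [k [-> [Hk|Hk]]]; [left|right]; exists k.
Qed.

Lemma coef_uniq (c d : 'I_N -> R) :
  \sum_(i < N) c i *: Delta`_i = \sum_(i < N) d i *: Delta`_i ->
  forall i, c i = d i.
Proof.
case: hDelta => _ _ free _ E i; apply/eqP; rewrite -subr_eq0; apply/eqP.
apply: (free (fun i => c i - d i)).
by under eq_bigr do rewrite scalerBl; rewrite sumrB E subrr.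
Qed.

Lemma pos_neg_vec0 g : pos_vec g -> neg_vec g -> g = 0.
Proof.
move=> [k [Ek Hk]] [k' [Ek' Hk']].
have coef_eq := coef_uniq (etrans (esym Ek) Ek').
rewrite Ek big1 // => i _; have /eqP := coef_eq i; rewrite eqr_int => /eqP kk'.
suff -> : k i = 0 by rewrite scale0r.
by apply/eqP; rewrite eq_le Hk andbT kk' Hk'.
Qed.

Lemma pos_root_not_neg g : g \in Phi -> pos_vec g -> ~ neg_vec g.
Proof.
by move=> /root_neq0 g0 gp /(pos_neg_vec0 gp) g_0; rewrite g_0 eqxx in g0.
Qed.

Lemma pos_vecN g : pos_vec g -> neg_vec (- g).
Proof.
move=> [k [-> Hk]]; exists (fun i => - k i).
split => [|i]; last by rewrite oppr_le0.
by rewrite -sumrN; apply: eq_bigr => i _; rewrite intrN scaleNr.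
Qed.

Lemma neg_vecN g : neg_vec g -> pos_vec (- g).
Proof.
move=> [k [-> Hk]]; exists (fun i => - k i).
split => [|i]; last by rewrite oppr_ge0.
by rewrite -sumrN; apply: eq_bigr => i _; rewrite intrN scaleNr.
Qed.

Lemma neg_mul_refl b v : b \in Phi -> pos_vec (b *m v) ->
  neg_vec (b *m (refl b *m v)).
Proof.
by move=> Hb /pos_vecN; rewrite mulmxA mulmx_refl_self ?root_neq0 // mulNmx.
Qed.

Lemma pos_refl_repr c : c \in Phi ->
  exists b, [/\ b \in Phi, pos_vec b & refl b = refl c].
Proof.
move=> Hc; case: (pos_or_neg Hc) => Hpn; first by exists c.
by exists (- c); split; [exact: rootN | exact: neg_vecN | exact: reflN].
Qed.

Lemma simple_index s : s \in Delta -> exists j : 'I_N, Delta`_j = s.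
Proof.
by move=> Hs; exists (Ordinal (etrans (index_mem s Delta) Hs)); exact: nth_index.
Qed.

Lemma sum_delta (j : 'I_N) (c : R) :
  \sum_(i < N) ((i == j)%:R * c) *: Delta`_i = c *: Delta`_j.
Proof.
rewrite (bigD1 j) //= eqxx mul1r big1 ?addr0 // => i /negbTE ->.
by rewrite mul0r scale0r.
Qed.

Lemma pos_simple s : s \in Delta -> pos_vec s.
Proof.
move=> /simple_index [j <-]; exists (fun i => (i == j)%:R); split => [|i].
  rewrite -[Delta`_j]scale1r -sum_delta; apply: eq_bigr => i _.
  by rewrite mulr1; case: (i == j).
by case: (i == j).
Qed.

(* The reflection in a simple root s permutes the positive roots other than
   s: it only changes the s-coordinate, and a positive root other than s has
   another positive coordinate since Phi is reduced. *)
Lemma pos_refl_simple s g : s \in Delta -> g \in Phi -> pos_vec g -> g != s ->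
  pos_vec (g *m refl s).
Proof.
move=> Hs Hg [k [Ek Hk]] gs; have [j Ej] := simple_index Hs.
have Hgs : g *m refl s \in Phi := root_refl (simple_root Hs) Hg.
case: (pickP (fun i => (i != j) && (0 < k i))) => [i /andP [ij kpos] | k_supp].
  case: (pos_or_neg Hgs) => // [[k' [Ek' Hk']]]; exfalso.
  set c := 2 * dotv g s / dotv s s.
  have E : \sum_(l < N) ((k l)%:~R - (l == j)%:R * c) *: Delta`_l =
           \sum_(l < N) (k' l)%:~R *: Delta`_l.
    under eq_bigr do rewrite scalerBl.
    by rewrite sumrB sum_delta Ej -Ek -Ek' mulmx_refl.
  have /eqP := coef_uniq E i; rewrite (negbTE ij) mul0r subr0 eqr_int => /eqP kk'.
  by move: (Hk' i); rewrite -kk' leNgt kpos.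
have g_mult : g = (k j)%:~R *: s.
  rewrite Ek (bigD1 j) //= Ej big1 ?addr0 // => i ij.
  suff -> : k i = 0 by rewrite scale0r.
  apply/eqP; rewrite eq_le Hk andbT leNgt.
  by move: (k_supp i); rewrite ij /= => ->.
have kjs_root : (k j)%:~R *: s \in Phi by rewrite -g_mult.
case: hPhi => _ _ _ reduced.
have [kj1 | kjN1] := reduced s _ (simple_root Hs) kjs_root.
  by rewrite g_mult kj1 scale1r eqxx in gs.
by have := Hk j; rewrite -(ler0z R) kjN1 lerNr oppr0 ler10.
Qed.

Lemma strong_exchange b ws : {subset ws <= Delta} -> b \in Phi -> pos_vec b ->
  neg_vec (b *m wprod ws) ->
  exists ws', [/\ subseq ws' ws, (size ws').+1 = size ws &
                  refl b *m wprod ws = wprod ws'].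
Proof.
elim: ws b => [|s ws IH] b Hws Hb bp bwn /=.
  by rewrite mulmx1 in bwn; case: (pos_root_not_neg Hb bp bwn).
have Hs : s \in Delta by rewrite Hws ?mem_head.
have {}Hws : {subset ws <= Delta} by move=> x Hx; rewrite Hws // inE Hx orbT.
have [-> | bs] := eqVneq b s.
  by exists ws; rewrite reflKl ?simple_neq0 //; split => //; exact: subseq_cons.
have Hbs : b *m refl s \in Phi := root_refl (simple_root Hs) Hb.
have [|ws' [sub sz E]] := IH _ Hws Hbs (pos_refl_simple Hs Hb bp bs).
  by rewrite -mulmxA.
exists (s :: ws'); rewrite /= eqxx sz sub; split => //.
by rewrite mulmxA refl_mul_conj ?simple_neq0 // -mulmxA E.
Qed.

Lemma strong_exchange_tail b s ws : {subset s :: ws <= Delta} -> b \in Phi ->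
  pos_vec b -> b != s -> neg_vec (b *m wprod (s :: ws)) ->
  exists ws', [/\ subseq ws' ws, (size ws').+1 = size ws &
                  refl b *m wprod (s :: ws) = refl s *m wprod ws'].
Proof.
move=> Hws Hb bp bs bwn; have Hs : s \in Delta by rewrite Hws ?mem_head.
have {}Hws : {subset ws <= Delta} by move=> x Hx; rewrite Hws // inE Hx orbT.
have Hbs : b *m refl s \in Phi := root_refl (simple_root Hs) Hb.
have [|ws' [sub sz E]] := strong_exchange Hws Hbs (pos_refl_simple Hs Hb bp bs).
  by rewrite -mulmxA.
by exists ws'; rewrite /= mulmxA refl_mul_conj ?simple_neq0 // -mulmxA E.
Qed.

Lemma subseq_word ws ws' : subseq ws' ws -> {subset ws <= Delta} ->
  {subset ws' <= Delta}.
Proof. by move=> /mem_subseq sub Hws x /sub /Hws. Qed.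

Lemma exchange_word b ws v : is_word Delta ws v -> b \in Phi -> pos_vec b ->
  neg_vec (b *m v) ->
  exists ws', [/\ subseq ws' ws, (size ws').+1 = size ws &
                  is_word Delta ws' (refl b *m v)].
Proof.
move=> [Hws <-] Hb bp bvn; have [ws' [sub sz E]] := strong_exchange Hws Hb bp bvn.
by exists ws'; split => //; split; [exact: subseq_word sub Hws | rewrite E].
Qed.

Lemma has_length_uniq w k k' :
  has_length Delta w k -> has_length Delta w k' -> k = k'.
Proof.
move=> [[ws [Hw <-]] min] [[ws' [Hw' <-]] min'].
by apply/eqP; rewrite eqn_leq min // min'.
Qed.

Lemma reduced_of_length ws w k : has_length Delta w k -> is_word Delta ws w ->
  size ws = k -> reduced_word Delta ws w.
Proof. by move=> [_ min] Hw sz; split => // ws' /min; rewrite sz. Qed.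

Lemma bruhat_le_length v w m ws : bruhat_le Delta v w -> has_length Delta v m ->
  is_word Delta ws w -> (m <= size ws)%N.
Proof.
move=> [ws0 [[_ min0] [us [sub [Hus _]]]]] [_ minv] Hws.
exact: leq_trans (minv _ Hus) (leq_trans (size_subseq sub) (min0 _ Hws)).
Qed.

Lemma length_refl_gt b v m ws : b \in Phi -> pos_vec b -> pos_vec (b *m v) ->
  has_length Delta v m -> is_word Delta ws (refl b *m v) -> (m < size ws)%N.
Proof.
move=> Hb bp bvp [_ min] Hws.
have [ws' [_ sz Hws']] := exchange_word Hws Hb bp (neg_mul_refl Hb bvp).
by rewrite reflKl ?root_neq0 // in Hws'; rewrite -sz ltnS min.
Qed.

Lemma pos_mul_of_length b v m : b \in Phi -> pos_vec b -> has_length Delta v m ->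
  has_length Delta (refl b *m v) m.+1 -> pos_vec (b *m v).
Proof.
move=> Hb bp [[ws [Hws sz]] _] [_ min].
have [] // := pos_or_neg (_ : b *m v \in Phi).
  by case: Hws => Hws <-; rewrite root_mul_word.
by move=> /(exchange_word Hws Hb bp) [ws' [_ sz' /min]]; lia.
Qed.

Lemma bruhat_lt_refl c v m : c \in Phi -> has_length Delta v m ->
  has_length Delta (refl c *m v) m.+1 -> bruhat_lt Delta v (refl c *m v).
Proof.
move=> Hc Hv; have [b [Hb bp <-]] := pos_refl_repr Hc => Hbv.
have bvp := pos_mul_of_length Hb bp Hv Hbv.
have bwn := neg_mul_refl Hb bvp.
have [[ws [Hws sz]] _] := Hbv.
have [ws' [sub sz' Hws']] := exchange_word Hws Hb bp bwn.
rewrite reflKl ?root_neq0 // in Hws'.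
split=> [|vbv]; last by rewrite -vbv in Hbv; have := has_length_uniq Hv Hbv; lia.
exists ws; split; first exact: reduced_of_length Hbv Hws sz.
exists ws'; split => //; apply: reduced_of_length Hv Hws' _.
by apply/eqP; rewrite -eqSS sz' sz.
Qed.

Lemma has_length_refl_simple b u m : b \in Delta -> pos_vec (b *m u) ->
  has_length Delta u m -> has_length Delta (refl b *m u) m.+1.
Proof.
move=> Hb bup Hu; split; last first.
  by move=> ws; apply: length_refl_gt (simple_root Hb) (pos_simple Hb) bup Hu.
have [[us [[Hus Eus] sz]] _] := Hu.
exists (b :: us); split; last by rewrite /= sz.
split; last by rewrite /= Eus.
by move=> x; rewrite inE => /predU1P [-> //|/Hus].
Qed.

Lemma pos_mul_refl_simple b beta w k : b \in Delta -> beta \in Phi ->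
  pos_vec beta -> beta != b -> has_length Delta w k ->
  has_length Delta (refl beta *m w) k.+1 ->
  (forall ws, is_word Delta ws (refl b *m w) -> (k <= size ws)%N) ->
  pos_vec (b *m (refl beta *m w)).
Proof.
move=> Hb Hbeta betap betab Hw Hu min_bw; set u := refl beta *m w in Hu *.
have [[us [Hus sz_us]] _] := Hu.
have [] // := pos_or_neg (_ : b *m u \in Phi).
  by case: Hus => Hus <-; rewrite root_mul_word ?simple_root.
move=> bun; exfalso.
have betaun : neg_vec (beta *m u).
  exact/neg_mul_refl/(pos_mul_of_length Hbeta betap Hw Hu).
have [vs [sub_vs sz_vs [Hvs Evs]]] :=
  exchange_word Hus (simple_root Hb) (pos_simple Hb) bun.
have Hbvs : {subset b :: vs <= Delta}.
  by move=> x; rewrite inE => /predU1P [-> //|]; apply: Hvs.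
have Eu : wprod (b :: vs) = u by rewrite /= Evs reflKl ?simple_neq0.
have betavn : neg_vec (beta *m wprod (b :: vs)) by rewrite Eu.
have [rest [sub_rest sz_rest E]] :=
  strong_exchange_tail Hbvs Hbeta betap betab betavn.
rewrite Eu /u reflKl ?root_neq0 // in E.
have /min_bw : is_word Delta rest (refl b *m w).
  by split; [exact: subseq_word sub_rest Hvs | rewrite E reflKl ?simple_neq0].
lia.
Qed.

End RootSystem.

Theorem mainTheorem12 (R : realType) (n : nat) (Phi Delta : seq 'rV[R]_n)
    (hPhi : is_root_system Phi) (hDelta : is_base Phi Delta)
    (a : 'rV[R]_n) (ha : a \in Phi) (w : 'M[R]_n) (k : nat)
    (hw : has_length Delta w k)
    (hsw : has_length Delta (refl a *m w) k.+1) :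
  bruhat_lt Delta w (refl a *m w) /\
  (forall b, b \in Delta -> refl b <> refl a ->
     bruhat_lt Delta w (refl b *m w) ->
     bruhat_lt Delta (refl a *m w) (refl b *m (refl a *m w))).
Proof.
split; first exact: (bruhat_lt_refl hPhi hDelta ha hw hsw).
move=> b Hb ba [bw _].
have [beta [Hbeta betap Ebeta]] := pos_refl_repr hPhi hDelta ha.
rewrite -Ebeta in hsw ba *.
have betab : beta != b by apply/eqP => beta_b; apply: ba; rewrite beta_b.
have bup := pos_mul_refl_simple hPhi hDelta Hb Hbeta betap betab hw hsw
  (fun ws => bruhat_le_length bw hw).
have hbsw := has_length_refl_simple hPhi hDelta Hb bup hsw.
exact (bruhat_lt_refl hPhi hDelta (simple_root hDelta Hb) hsw hbsw).
Qed.
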